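(* Let $\mathcal{F}=\mathcal{B}(K_3)$. Then for $n\ge 3$, $$2^{n-2}(1-o(1))\le f(n,\mathcal{F})\le 2^{n-2},$$ where $o(1)\to 0$ as $n\to\infty$.
   Context: For a graph $G$, a hypergraph $H$ is a Berge-$G$ hypergraph if there are an injective map $\phi:V(G)\to V(H)$ and pairwise distinct hyperedges $e_{xy}\in E(H)$, one for each $xy\in E(G)$, with $\phi(x),\phi(y)\in e_{xy}$. $\mathcal{B}(G)$ denotes the family of all Berge-$G$ hypergraphs. For a positive integer $n$ and a graph $G$, $f(n,\mathcal{B}(G))$ is the smallest number of colors in a coloring of all subsets of $[n]=\{1,\dots,n\}$ (i.e. of $2^{[n]}$) such that there is no monochromatic Berge-$G$ hypergraph, i.e. no color class, viewed as a (non-uniform) hypergraph on $[n]$, contains a Berge-$G$ subhypergraph. *)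

From mathcomp Require Import all_boot.
Set Implicit Arguments. Unset Strict Implicit. Unset Printing Implicit Defensive.

(* A (non-uniform) hypergraph on [n] = 'I_n is given by a predicate S on
   subsets of 'I_n (its set of hyperedges). *)
Definition berge_K3 (n : nat) (S : pred {set 'I_n}) : bool :=
  [exists x : 'I_n, exists y : 'I_n, exists z : 'I_n,
   exists e1 : {set 'I_n}, exists e2 : {set 'I_n}, exists e3 : {set 'I_n},
   [&& [&& x != y, y != z & x != z],
       [&& e1 != e2, e2 != e3 & e1 != e3],
       [&& S e1, S e2 & S e3],
       (x \in e1) && (y \in e1),
       (y \in e2) && (z \in e2) &
       (x \in e3) && (z \in e3)]].

Definition good_coloring (n k : nat) : bool :=
  [exists c : {ffun {set 'I_n} -> 'I_k},
     [forall i : 'I_k, ~~ berge_K3 (fun e => c e == i)]].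

Lemma good_coloring_exists (n : nat) : exists k, good_coloring n k.
Proof.
exists #|{set 'I_n}|; apply/existsP.
exists [ffun e => enum_rank e]; apply/forallP => i; apply/negP.
case/existsP=> x; case/existsP=> y; case/existsP=> z.
case/existsP=> e1; case/existsP=> e2; case/existsP=> e3.
case/and5P=> _ /and3P[ne12 _ _] /and3P[c1 c2 _] _ _.
move: c1 c2; rewrite !ffunE => /eqP h1 /eqP h2.
by move: ne12; rewrite (enum_rank_inj (etrans h1 (esym h2))) eqxx.
Qed.

Definition f_BK3 (n : nat) : nat := ex_minn (good_coloring_exists n).

From mathcomp Require Import all_boot zify.
Set Implicit Arguments. Unset Strict Implicit. Unset Printing Implicit Defensive.

(* A Berge-K3 consists of three distinct, pairwise intersecting hyperedges,
   and three distinct hyperedges meeting pairwise in at least three points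
   always carry one.

   Upper bound: write n = m + 2.  Call the normal form of A the set of points
   whose membership in A agrees with that of the point 0; A is determined by
   its normal form up to complementation.  Colour A by the restriction of its
   normal form to the last m points.  Inside a colour class the normal form is
   then fixed by one more bit (whether 1 lies in it), so among three edges of
   a class two have the same normal form, hence are equal or complementary,
   hence not distinct and intersecting.

   Lower bound: two sets of size at least n/2 + 2 meet in at least three
   points, so every colour class contains at most two of them.  All but at
   most 2^(n-1) + 2 C(n, n/2) subsets are that large, and
   C(n, n/2)^2 (n + 1) <= 4^n makes the binomial term o(2^n). *)

Lemma f_BK3_min n k : good_coloring n k -> f_BK3 n <= k.
Proof. by rewrite /f_BK3; case: ex_minnP => m _; apply. Qed.

Lemma f_BK3_good n : good_coloring n (f_BK3 n).
Proof. by rewrite /f_BK3; case: ex_minnP. Qed.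

Lemma card_set (T : finType) : #|{set T}| = 2 ^ #|T|.
Proof. by rewrite -[LHS]cardsT -powersetT card_powerset cardsT. Qed.

Lemma card_setD1_gt (T : finType) (A : {set T}) x k : k.+1 < #|A| -> k < #|A :\ x|.
Proof. by rewrite (cardsD1 x A); case: (x \in A) => //; apply: ltnW. Qed.

Section BergeTriangle.
Variables (n : nat) (S : pred {set 'I_n}).

Lemma berge_K3_intersecting : berge_K3 S ->
  exists e1 e2 e3 : {set 'I_n},
    [/\ [/\ S e1, S e2 & S e3], [/\ e1 != e2, e2 != e3 & e1 != e3] &
        [/\ ~~ [disjoint e1 & e2], ~~ [disjoint e2 & e3] & ~~ [disjoint e1 & e3]]].
Proof.
case/existsP=> x; case/existsP=> y; case/existsP=> z.
case/existsP=> e1; case/existsP=> e2; case/existsP=> e3.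
case/and5P=> _ /and3P[n12 n23 n13] /and3P[S1 S2 S3] /andP[x1 y1].
case/andP=> /andP[y2 z2] /andP[x3 z3].
exists e1, e2, e3; split=> //; split; apply/negP => /disjointFr.
- by move/(_ y y1); rewrite y2.
- by move/(_ z z2); rewrite z3.
- by move/(_ x x1); rewrite x3.
Qed.

Lemma meet3_berge_K3 (e1 e2 e3 : {set 'I_n}) :
  S e1 -> S e2 -> S e3 -> [&& e1 != e2, e2 != e3 & e1 != e3] ->
  2 < #|e1 :&: e2| -> 2 < #|e2 :&: e3| -> 2 < #|e1 :&: e3| -> berge_K3 S.
Proof.
move=> S1 S2 S3 ne h12 h23 h13.
have /card_gt0P [y] := ltnW (ltnW h12).
rewrite inE => /andP[y1 y2].
have /card_gt0P [z] : 0 < #|e2 :&: e3 :\ y| by apply/card_setD1_gt/ltnW.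
rewrite !inE => /and3P[zy z2 z3].
have /card_gt0P [x] : 0 < #|e1 :&: e3 :\ y :\ z| by apply/card_setD1_gt/card_setD1_gt.
rewrite !inE => /and4P[xz xy x1 x3].
apply/existsP; exists x; apply/existsP; exists y; apply/existsP; exists z.
apply/existsP; exists e1; apply/existsP; exists e2; apply/existsP; exists e3.
by rewrite xy xz eq_sym zy ne S1 S2 S3 x1 y1 y2 z2 x3 z3.
Qed.

End BergeTriangle.

Definition normal (T : finType) (r : T) (A : {set T}) : {set T} :=
  [set j | (j \in A) == (r \in A)].

Lemma normal_inj_setC (T : finType) (r : T) (A B : {set T}) :
  normal r A = normal r B -> A = B \/ A = ~: B.
Proof.
move=> /setP eqAB.
have agree j : ((j \in A) == (r \in A)) = ((j \in B) == (r \in B)).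
  by have := eqAB j; rewrite !inE.
by case: (boolP ((r \in A) == (r \in B))) => rAB; [left | right];
  apply/setP => j; have := agree j; rewrite ?inE; move: rAB;
  case: (j \in A); case: (j \in B); case: (r \in A); case: (r \in B).
Qed.

Section UpperBound.
Variable m : nat.

Definition trace (A : {set 'I_m.+2}) : {set 'I_m} :=
  [set i | lift ord0 (lift ord0 i) \in normal ord0 A].

Definition pivot_bit (A : {set 'I_m.+2}) : bool := lift ord0 ord0 \in normal ord0 A.

Lemma trace_pivot_bit_inj (A B : {set 'I_m.+2}) :
  trace A = trace B -> pivot_bit A = pivot_bit B -> normal ord0 A = normal ord0 B.
Proof.
move=> /setP eqAB bitAB; apply/setP => j.
case: (unliftP ord0 j) => [j'|] ->; last by rewrite !inE !eqxx.
case: (unliftP ord0 j') => [i|] -> //.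
by have := eqAB i; rewrite !inE.
Qed.

Lemma trace_pivot_bit_disjoint (A B : {set 'I_m.+2}) :
  trace A = trace B -> pivot_bit A = pivot_bit B -> A != B -> [disjoint A & B].
Proof.
move=> eqt eqb neAB.
case: (normal_inj_setC (trace_pivot_bit_inj eqt eqb)) => eqAB.
  by rewrite eqAB eqxx in neAB.
by rewrite eqAB disjoints_subset.
Qed.

Definition trace_coloring : {ffun {set 'I_m.+2} -> 'I_(2 ^ m)} :=
  [ffun A => cast_ord (etrans (card_set _) (congr1 _ (card_ord m)))
                      (enum_rank (trace A))].

Lemma trace_coloringE A B : trace_coloring A = trace_coloring B -> trace A = trace B.
Proof. by rewrite !ffunE => /cast_ord_inj /enum_rank_inj. Qed.

Lemma good_trace_coloring : good_coloring m.+2 (2 ^ m).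
Proof.
apply/existsP; exists trace_coloring; apply/forallP => i; apply/negP.
case/berge_K3_intersecting => e1 [e2 [e3 [[/eqP c1 /eqP c2 /eqP c3] [n12 n23 n13]]]].
move=> [d12 d23 d13].
have t12 := trace_coloringE (etrans c1 (esym c2)).
have t23 := trace_coloringE (etrans c2 (esym c3)).
have t13 := trace_coloringE (etrans c1 (esym c3)).
have := trace_pivot_bit_disjoint t12; have := trace_pivot_bit_disjoint t23.
have := trace_pivot_bit_disjoint t13.
by rewrite (negPf d12) (negPf d23) (negPf d13) n12 n23 n13;
  case: (pivot_bit e1); case: (pivot_bit e2); case: (pivot_bit e3); auto.
Qed.

End UpperBound.

Lemma f_BK3_upper n : 3 <= n -> f_BK3 n <= 2 ^ (n - 2).
Proof.
by case: n => [|[|m]] // _; rewrite !subSS subn0; apply/f_BK3_min/good_trace_coloring.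
Qed.

Lemma card_small_sets (T : finType) :
  2 * #|[set A : {set T} | #|A| < #|T|./2]| <= 2 ^ #|T|.
Proof.
set Small := [set A : {set T} | _].
have card_compl : #|(@setC T) @: Small| = #|Small|.
  by rewrite card_imset //; apply: setC_inj.
have disj : [disjoint Small & (@setC T) @: Small].
  rewrite -setI_eq0; apply/eqP/setP => A; rewrite !inE.
  apply/negP => /andP[smallA /imsetP [B smallB eqA]]; subst A.
  move: smallA smallB; rewrite !inE; have := cardsC B.
  have := odd_double_half #|T|; case: (odd _) => /=; lia.
have := cardsUI Small ((@setC T) @: Small).
rewrite (disjoint_setI0 disj) cards0 card_compl.
have := subset_leq_card (subsetT (Small :|: (@setC T) @: Small)); rewrite cardsT card_set.
lia.
Qed.

Lemma bin_half_succ_le n : 'C(n, n./2.+1) <= 'C(n, n./2).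
Proof.
rewrite -(@leq_pmul2l n./2.+1) // mul_bin_left leq_mul2r.
by have := odd_double_half n; case: (odd n) => /=; lia.
Qed.

Lemma bin_odd_half_sym j : 'C(j.*2.+1, j.+1) = 'C(j.*2.+1, j).
Proof. by rewrite -[RHS]bin_sub; [congr binomial; lia | lia]. Qed.

Lemma bin_double_succ j : j.+1 * 'C(j.+1.*2, j.+1) = 2 * j.*2.+1 * 'C(j.*2, j).
Proof.
apply/eqP; rewrite -(@eqn_pmul2l j.+1) //; apply/eqP.
rewrite doubleS -(mul_bin_diag j.*2.+2 j) /= mulnA (mulnC j.+1) -mulnA.
rewrite -bin_odd_half_sym -(mul_bin_diag j.*2.+1 j) /=; lia.
Qed.

Lemma central_bin_sqr j : 'C(j.*2, j) ^ 2 * j.*2.+1 <= (2 ^ j.*2) ^ 2.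
Proof.
elim: j => [//|j IH].
have pow4 : 2 ^ j.+1.*2 = 4 * 2 ^ j.*2 by rewrite doubleS !expnS mulnA.
rewrite -(@leq_pmul2l (j.+1 ^ 2)) ?expn_gt0 // pow4.
have -> : j.+1 ^ 2 * ('C(j.+1.*2, j.+1) ^ 2 * j.+1.*2.+1)
          = (j.+1 * 'C(j.+1.*2, j.+1)) ^ 2 * j.+1.*2.+1 by rewrite expnMn; lia.
rewrite bin_double_succ.
move: IH; set C := 'C(j.*2, j); set P := 2 ^ j.*2 => IH.
have : j.*2.+1 * j.+1.*2.+1 <= 4 * j.+1 ^ 2 by lia.
rewrite !expnMn; nia.
Qed.

Lemma bin_half_sqr n : 'C(n, n./2) ^ 2 * n.+1 <= (2 ^ n) ^ 2.
Proof.
have := odd_double_half n; set j := n./2; clearbody j.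
case: (odd n) => /= <-; last exact: central_bin_sqr.
rewrite add1n; have := central_bin_sqr j.+1.
rewrite doubleS binS bin_odd_half_sym addnn -mul2n [2 ^ j.*2.+2]expnS !expnMn.
nia.
Qed.

Lemma bin_half_small K : exists N, forall n, N <= n -> 4 * K * 'C(n, n./2) <= 2 ^ n.
Proof.
exists (16 * K ^ 2) => n leN; rewrite -leq_sqr.
have := bin_half_sqr n; rewrite !expnMn; nia.
Qed.

Lemma meet_half_large (T : finType) (A B : {set T}) :
  #|T|./2.+2 <= #|A| -> #|T|./2.+2 <= #|B| -> 2 < #|A :&: B|.
Proof.
have := cardsUI A B; have := max_card (A :|: B).
by have := odd_double_half #|T|; rewrite -addnn; case: (odd _); lia.
Qed.

Section LargeSets.
Variable n : nat.

Definition large : {set {set 'I_n}} := [set A : {set 'I_n} | n./2.+2 <= #|A|].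

Lemma card_large_color_class k (c : {ffun {set 'I_n} -> 'I_k}) i :
  ~~ berge_K3 (fun e => c e == i) -> #|[set A in large | c A == i]| <= 2.
Proof.
move=> noK3; rewrite leqNgt; apply/negP.
case/card_gt2P => e1 [e2 [e3 [[] + + + [n12 n23 n31]]]]; rewrite !inE.
move=> /andP[L1 c1] /andP[L2 c2] /andP[L3 c3].
apply: (negP noK3); apply: (meet3_berge_K3 c1 c2 c3).
  by rewrite n12 n23 eq_sym n31.
all: by apply: meet_half_large; rewrite card_ord.
Qed.

Lemma card_large_good_coloring k : good_coloring n k -> #|large| <= 2 * k.
Proof.
case/existsP => c /forallP noK3.
rewrite -sum1_card (partition_big c predT) //=.
apply: (@leq_trans (\sum_(i < k) 2)); last by rewrite sum_nat_const card_ord mulnC.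
apply: leq_sum => i _; apply: leq_trans (card_large_color_class (noK3 i)).
by rewrite -sum1_card; apply: eq_leq; apply: eq_bigl => A; rewrite !inE.
Qed.

Lemma card_not_large : 2 * #|~: large| <= 2 ^ n + 4 * 'C(n, n./2).
Proof.
have := card_small_sets 'I_n; rewrite card_ord.
set Small := [set A | _] => card_small.
pose D j : {set {set 'I_n}} := [set A : {set 'I_n} | #|A| == j].
have cardD j : #|D j| = 'C(n, j) by rewrite card_draws card_ord.
have cover : ~: large \subset Small :|: D n./2 :|: D n./2.+1.
  by apply/subsetP => A; rewrite !inE -ltnNge; lia.
have le_cover : #|~: large| <= #|Small| + 'C(n, n./2) + 'C(n, n./2.+1).
  rewrite -!cardD; apply: leq_trans (subset_leq_card cover) _.
  by apply: leq_trans (leq_card_setU _ _) _; rewrite leq_add2r leq_card_setU.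
have := bin_half_succ_le n; lia.
Qed.

End LargeSets.

Lemma pow_le_f_BK3 n : 2 ^ n <= 4 * f_BK3 n + 4 * 'C(n, n./2).
Proof.
have := card_large_good_coloring (f_BK3_good n); have := card_not_large n.
have := cardsC (large n); rewrite card_set card_ord; lia.
Qed.

Lemma f_BK3_lower K : exists N, forall n, N <= n ->
  (K - 1) * 2 ^ (n - 2) <= K * f_BK3 n.
Proof.
have [N smallN] := bin_half_small K; exists (maxn N 2) => n.
rewrite geq_max => /andP[/smallN small_bin n_ge2].
have := pow_le_f_BK3 n; move: small_bin.
rewrite -(subnK n_ge2) expnD -/(2 ^ 2) (subnK n_ge2); nia.
Qed.

Theorem theorem1 :
  (forall n : nat, 3 <= n -> f_BK3 n <= 2 ^ (n - 2)) /\
  (forall k : nat, 0 < k ->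
     exists N : nat, forall n : nat, N <= n ->
       (k - 1) * 2 ^ (n - 2) <= k * f_BK3 n).
Proof. by split=> [|k _]; [exact: f_BK3_upper | exact: f_BK3_lower]. Qed.
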